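(* Let $\mathbb{T}$ be a partial tableau and let $n$ be an internal node of $\mathbb{T}$. If every child of $n$ is valid, then $n$ is valid.
   Context: Fix a set $\Sigma$ and a countably infinite set $\mathrm{Var}$ of propositional variables. An LTS is $\mathcal T=(\mathcal S,\to)$ with ${\to}\subseteq\mathcal S\times\Sigma\times\mathcal S$; for $K\subseteq\Sigma$ write $s\xrightarrow{K}s'$ if $s\xrightarrow{a}s'$ for some $a\in K$. A valuation is $\mathcal V:\mathrm{Var}\to 2^{\mathcal S}$. Formulas: $\Phi::=Z\mid\neg\Phi\mid\Phi_1\wedge\Phi_2\mid[K]\Phi\mid\nu Z.\Phi$ ($K\subseteq\Sigma$, $Z\in\mathrm{Var}$), well-formed if in each subformula $\nu Z.\Phi$ every free occurrence of $Z$ in $\Phi$ is under an even number of negations. Derived: $\Phi_1\vee\Phi_2=\neg(\neg\Phi_1\wedge\neg\Phi_2)$, $\langle K\rangle\Phi=\neg[K]\neg\Phi$, $\mu Z.\Phi=\neg\nu Z.\neg\Phi[Z:=\neg Z]$. Semantics: $[\![Z]\!]_{\mathcal V}=\mathcal V(Z)$, $[\![\neg\Phi]\!]_{\mathcal V}=\mathcal S\setminus[\![\Phi]\!]_{\mathcal V}$, $[\![\Phi_1\wedge\Phi_2]\!]_{\mathcal V}=[\![\Phi_1]\!]_{\mathcal V}\cap[\![\Phi_2]\!]_{\mathcal V}$, $[\![[K]\Phi]\!]_{\mathcal V}=\{s\mid\forall s'.\ s\xrightarrow{K}s'\Rightarrow s'\in[\![\Phi]\!]_{\mathcal V}\}$,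 $[\![\nu Z.\Phi]\!]_{\mathcal V}=\bigcup\{S'\subseteq\mathcal S\mid S'\subseteq[\![\Phi]\!]_{\mathcal V[Z:=S']}\}$. A formula is in positive normal form if built from $Z,\neg Z,\wedge,\vee,[K],\langle K\rangle,\nu,\mu$ (negation only on variables). Substitution is capture-free. A definition list is a finite sequence $\Delta=(U_1=\Phi_1)\cdots(U_n=\Phi_n)$ of distinct $U_i\in\mathrm{Var}$ and formulas $\Phi_i$ such that no $U_i$ occurs bound in any $\Phi_j$ and $U_j$ is not free in $\Phi_i$ when $i\le j$; $\Delta(U_i)=\Phi_i$, $\mathrm{dom}(\Delta)=\{U_1,\dots,U_n\}$. Valuation extension: $\mathcal V[\varepsilon]=\mathcal V$, $\mathcal V[(U=\Phi)\cdot\Delta]=(\mathcal V[U:=[\![\Phi]\!]_{\mathcal V}])[\Delta]$. A sequent $S\vdash^{\mathcal T}_{\mathcal V,\Delta}\Phi$ consists of $S\subseteq\mathcal S$, a definition list $\Delta$ and a formula $\Phi$ in positive normal form in which every $U\in\mathrm{dom}(\Delta)$ is positive and not bound; its semantics is $[\![\Phi]\!]_{\mathcal V[\Delta]}$, and it is valid iff $S\subseteq[\![\Phi]\!]_{\mathcal V[\Delta]}$. Proof rules (conclusion; premises in order), all with the same $\mathcal T,\mathcal V$: ($\wedge$) $S\vdash_\Delta\Phi_1\wedge\Phi_2$; $S\vdash_\Delta\Phi_1$, $S\vdash_\Delta\Phi_2$. ($\vee$) $S\vdash_\Delta\Phi_1\vee\Phi_2$; $S_1\vdash_\Delta\Phi_1$,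 $S_2\vdash_\Delta\Phi_2$ where $S=S_1\cup S_2$. ($[K]$) $S\vdash_\Delta[K]\Phi$; $S'\vdash_\Delta\Phi$ with $S'=\{s'\mid\exists s\in S.\ s\xrightarrow{K}s'\}$. ($\langle K\rangle$, with witness function $f:S\to\mathcal S$ such that $s\xrightarrow{K}f(s)$ for all $s\in S$) $S\vdash_\Delta\langle K\rangle\Phi$; $f(S)\vdash_\Delta\Phi$. ($\sigma Z$, $\sigma\in\{\mu,\nu\}$) $S\vdash_\Delta\sigma Z.\Phi$; $S\vdash_{\Delta\cdot(U=\sigma Z.\Phi)}U$ with $U$ fresh (not used elsewhere in the tree). (Un) $S\vdash_\Delta U$; $S\vdash_\Delta\Phi[Z:=U]$ where $\Delta(U)=\sigma Z.\Phi$. (Thin) $S\vdash_\Delta\Phi$; $S'\vdash_\Delta\Phi$ where $S\subseteq S'$. A partial tableau is a finite nonempty ordered tree whose nodes are labelled by sequents over fixed $\mathcal T,\mathcal V$, where every internal node is labelled by a rule application (a rule name, together with a witness function in the case of $\langle K\rangle$) such that the node's sequent and its children's sequents (in order) form an instance of that rule, and leaves carry no rule application. A node is valid iff its sequent is valid. *)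

From Stdlib Require Import List Arith.
Import ListNotations.

Definition var := nat.

Definition set (A : Type) := A -> Prop.
Definition seteq {A : Type} (X Y : set A) : Prop := forall x, X x <-> Y x.
Definition subset {A : Type} (X Y : set A) : Prop := forall x, X x -> Y x.

Section Mu.
Variable Sigma : Type.
Variable St : Type.

Inductive form : Type :=
| FVar : var -> form
| FNeg : form -> form
| FAnd : form -> form -> form
| FBox : set Sigma -> form -> form
| FNu  : var -> form -> form.

(* Substitution of free occurrences of Z by Psi.  It stops at rebinding of Z;
   it is capture-free in every use below. *)
Fixpoint subst (Phi : form) (Z : var) (Psi : form) : form :=
  match Phi with
  | FVar X => if Nat.eqb X Z then Psi else FVar X
  | FNeg a => FNeg (subst a Z Psi)
  | FAnd a b => FAnd (subst a Z Psi) (subst b Z Psi)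
  | FBox K a => FBox K (subst a Z Psi)
  | FNu X a => if Nat.eqb X Z then FNu X a else FNu X (subst a Z Psi)
  end.

Definition FOr (a b : form) : form := FNeg (FAnd (FNeg a) (FNeg b)).
Definition FDia (K : set Sigma) (a : form) : form := FNeg (FBox K (FNeg a)).
Definition FMu (Z : var) (a : form) : form :=
  FNeg (FNu Z (FNeg (subst a Z (FNeg (FVar Z))))).

Fixpoint free_in (U : var) (Phi : form) : Prop :=
  match Phi with
  | FVar X => X = U
  | FNeg a => free_in U a
  | FAnd a b => free_in U a \/ free_in U b
  | FBox _ a => free_in U a
  | FNu X a => X <> U /\ free_in U a
  end.

Fixpoint bound_in (U : var) (Phi : form) : Prop :=
  match Phi with
  | FVar _ => False
  | FNeg a => bound_in U a
  | FAnd a b => bound_in U a \/ bound_in U b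
  | FBox _ a => bound_in U a
  | FNu X a => X = U \/ bound_in U a
  end.

Fixpoint sign_ok (even : bool) (Z : var) (Phi : form) : Prop :=
  match Phi with
  | FVar X => X = Z -> even = true
  | FNeg a => sign_ok (negb even) Z a
  | FAnd a b => sign_ok even Z a /\ sign_ok even Z b
  | FBox _ a => sign_ok even Z a
  | FNu X a => if Nat.eqb X Z then True else sign_ok even Z a
  end.

Definition positive (Z : var) (Phi : form) : Prop := sign_ok true Z Phi.

Fixpoint wf (Phi : form) : Prop :=
  match Phi with
  | FVar _ => True
  | FNeg a => wf a
  | FAnd a b => wf a /\ wf b
  | FBox _ a => wf a
  | FNu Z a => positive Z a /\ wf a
  end.

Inductive pnf : form -> Prop :=
| pnf_var Z : pnf (FVar Z)
| pnf_negvar Z : pnf (FNeg (FVar Z))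
| pnf_and a b : pnf a -> pnf b -> pnf (FAnd a b)
| pnf_or a b : pnf a -> pnf b -> pnf (FOr a b)
| pnf_box K a : pnf a -> pnf (FBox K a)
| pnf_dia K a : pnf a -> pnf (FDia K a)
| pnf_nu Z a : pnf a -> pnf (FNu Z a)
| pnf_mu Z a : pnf a -> pnf (FMu Z a).

Variable trans : St -> Sigma -> St -> Prop.

Definition stepK (K : set Sigma) (s t : St) : Prop :=
  exists a, K a /\ trans s a t.

Definition valuation := var -> set St.

Definition upd (V : valuation) (Z : var) (S : set St) : valuation :=
  fun X => if Nat.eqb X Z then S else V X.

Fixpoint sem (V : valuation) (Phi : form) : set St :=
  match Phi with
  | FVar Z => V Z
  | FNeg a => fun s => ~ sem V a s
  | FAnd a b => fun s => sem V a s /\ sem V b s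
  | FBox K a => fun s => forall t, stepK K s t -> sem V a t
  | FNu Z a => fun s => exists S' : set St,
                  S' s /\ (forall t, S' t -> sem (upd V Z S') a t)
  end.

Definition deflist := list (var * form).

Definition dom (D : deflist) : list var := map fst D.

Fixpoint lookup (D : deflist) (U : var) : option form :=
  match D with
  | [] => None
  | (X, Phi) :: D' => if Nat.eqb X U then Some Phi else lookup D' U
  end.

Definition is_deflist (D : deflist) : Prop :=
  NoDup (dom D) /\
  (forall U Phi, In U (dom D) -> In Phi (map snd D) -> ~ bound_in U Phi) /\
  (forall i j, i <= j -> j < length D ->
     ~ free_in (nth j (dom D) 0) (nth i (map snd D) (FVar 0))) /\
  (forall Phi, In Phi (map snd D) -> wf Phi).

Fixpoint ext (V : valuation) (D : deflist) : valuation :=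
  match D with
  | [] => V
  | (U, Phi) :: D' => ext (upd V U (sem V Phi)) D'
  end.

Record sequent : Type := Seq {
  sq_set : set St;
  sq_defs : deflist;
  sq_form : form }.

Definition is_sequent (q : sequent) : Prop :=
  is_deflist (sq_defs q) /\ pnf (sq_form q) /\ wf (sq_form q) /\
  (forall U, In U (dom (sq_defs q)) ->
     positive U (sq_form q) /\ ~ bound_in U (sq_form q)).

Definition valid (V : valuation) (q : sequent) : Prop :=
  subset (sq_set q) (sem (ext V (sq_defs q)) (sq_form q)).

(* Rule names; the diamond rule carries its witness function. *)
Inductive rule : Type :=
| RAnd | ROr | RBox | RDia (f : St -> St) | RSigma | RUn | RThin.

Definition is_sigma (Psi : form) (Z : var) (a : form) : Prop :=
  Psi = FNu Z a \/ Psi = FMu Z a.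

Inductive rule_inst : rule -> sequent -> list sequent -> Prop :=
| ri_and S D a b S1 S2 :
    seteq S1 S -> seteq S2 S ->
    rule_inst RAnd (Seq S D (FAnd a b)) [Seq S1 D a; Seq S2 D b]
| ri_or S D a b S1 S2 :
    seteq S (fun s => S1 s \/ S2 s) ->
    rule_inst ROr (Seq S D (FOr a b)) [Seq S1 D a; Seq S2 D b]
| ri_box S D K a S' :
    seteq S' (fun t => exists s, S s /\ stepK K s t) ->
    rule_inst RBox (Seq S D (FBox K a)) [Seq S' D a]
| ri_dia S D K a (f : St -> St) S' :
    (forall s, S s -> stepK K s (f s)) ->
    seteq S' (fun t => exists s, S s /\ t = f s) ->
    rule_inst (RDia f) (Seq S D (FDia K a)) [Seq S' D a]
| ri_sigma S D Psi Z a U S' :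
    is_sigma Psi Z a -> seteq S' S ->
    rule_inst RSigma (Seq S D Psi) [Seq S' (D ++ [(U, Psi)]) (FVar U)]
| ri_un S D U Psi Z a S' :
    lookup D U = Some Psi -> is_sigma Psi Z a -> seteq S' S ->
    rule_inst RUn (Seq S D (FVar U)) [Seq S' D (subst a Z (FVar U))]
| ri_thin S D Phi S' :
    subset S S' ->
    rule_inst RThin (Seq S D Phi) [Seq S' D Phi].

Inductive tab : Type :=
| TLeaf : sequent -> tab
| TNode : sequent -> rule -> list tab -> tab.

Definition root (t : tab) : sequent :=
  match t with TLeaf q => q | TNode q _ _ => q end.

Inductive tab_ok : tab -> Prop :=
| ok_leaf q : is_sequent q -> tab_ok (TLeaf q)
| ok_node q r cs : is_sequent q -> rule_inst r q (map root cs) ->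
    Forall tab_ok cs -> tab_ok (TNode q r cs).

Fixpoint node_at (t : tab) (p : list nat) : option tab :=
  match p with
  | [] => Some t
  | i :: p' =>
      match t with
      | TLeaf _ => None
      | TNode _ _ cs =>
          match nth_error cs i with
          | Some c => node_at c p'
          | None => None
          end
      end
  end.

Definition occurs (U : var) (Phi : form) : Prop := free_in U Phi \/ bound_in U Phi.

Definition mentions (U : var) (q : sequent) : Prop :=
  In U (dom (sq_defs q)) \/ occurs U (sq_form q) \/
  (exists Phi, In Phi (map snd (sq_defs q)) /\ occurs U Phi).

(* Freshness for the sigma rule: the new U is not used by any node outside
   the subtree rooted at the premise of that rule application. *)
Definition fresh_ok (T : tab) : Prop :=
  forall p q cs c U Psi,
    node_at T p = Some (TNode q RSigma cs) ->
    cs = [c] ->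
    sq_defs (root c) = sq_defs q ++ [(U, Psi)] ->
    forall p' n', node_at T p' = Some n' ->
      (~ exists p'', p' = (p ++ [0]) ++ p'') ->
      ~ mentions U (root n').

Definition partial_tableau (T : tab) : Prop := tab_ok T /\ fresh_ok T.

End Mu.

Arguments FVar {Sigma}.
Arguments partial_tableau {Sigma St} trans T.
Arguments valid {Sigma St} trans V q.
Arguments node_at {Sigma St} t p.
Arguments root {Sigma St} t.
Arguments TNode {Sigma St} _ _ _.
Arguments TLeaf {Sigma St} _.
Arguments Seq {Sigma St} _ _ _.

(* Local soundness is checked rule by rule; only the fixpoint rules need an
   argument.  Extending the definition list by U = σZ.Φ gives U exactly the
   value of σZ.Φ, which makes the σ-rule sound.  For (Un), the ordering
   condition on definition lists guarantees that U still denotes ⟦σZ.Φ⟧ in the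
   full list, and the substitution lemma turns ⟦Φ[Z:=U]⟧ into ⟦Φ⟧ with
   Z ↦ ⟦σZ.Φ⟧.  Positivity makes Φ monotone in Z, so ⟦νZ.Φ⟧ is a greatest
   fixpoint in the sense of Knaster–Tarski and ⟦μZ.Φ⟧ is the complement of one;
   in both cases ⟦Φ⟧(Z ↦ ⟦σZ.Φ⟧) ⊆ ⟦σZ.Φ⟧. *)

From Stdlib Require Import List Arith Lia.
Import ListNotations.

Definition monotone {A : Type} (f : set A -> set A) : Prop :=
  forall X Y, subset X Y -> subset (f X) (f Y).

Definition gfp {A : Type} (f : set A -> set A) : set A :=
  fun s => exists S', S' s /\ subset S' (f S').

Lemma gfp_postfixed {A : Type} (f : set A -> set A) :
  monotone f -> subset (gfp f) (f (gfp f)).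
Proof.
  intros Hf s [S' [Hs HS']].
  apply (Hf S'); [intros t Ht; exists S'; auto | auto].
Qed.

Lemma gfp_prefixed {A : Type} (f : set A -> set A) :
  monotone f -> subset (f (gfp f)) (gfp f).
Proof.
  intros Hf s Hs. exists (f (gfp f)); split; [exact Hs|].
  apply Hf, gfp_postfixed, Hf.
Qed.

Section Soundness.
Variables Sigma St : Type.
Variable trans : St -> Sigma -> St -> Prop.

Local Notation form := (form Sigma).
Local Notation sem := (sem Sigma St trans).
Local Notation ext := (ext Sigma St trans).
Local Notation upd := (upd St).

Lemma upd_eq (r : valuation St) Z S : upd r Z S Z = S.
Proof. unfold upd; now rewrite Nat.eqb_refl. Qed.

Lemma upd_neq (r : valuation St) Z S Y : Y <> Z -> upd r Z S Y = r Y.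
Proof. unfold upd; intros H; apply Nat.eqb_neq in H; now rewrite H. Qed.

Lemma upd_seteq (r r' : valuation St) Z S S' Y :
  seteq S S' -> (Y <> Z -> seteq (r Y) (r' Y)) ->
  seteq (upd r Z S Y) (upd r' Z S' Y).
Proof.
  intros HS Hr. destruct (Nat.eq_dec Y Z) as [->|HYZ].
  - now rewrite !upd_eq.
  - rewrite !upd_neq by exact HYZ. now apply Hr.
Qed.

Lemma upd_comm (r : valuation St) Z S X T Y : X <> Z ->
  upd (upd r Z S) X T Y = upd (upd r X T) Z S Y.
Proof.
  intros HXZ. unfold upd.
  destruct (Nat.eqb_spec Y X), (Nat.eqb_spec Y Z); congruence.
Qed.

Lemma upd_shadow (r : valuation St) Z S T Y : upd (upd r Z S) Z T Y = upd r Z T Y.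
Proof. unfold upd. now destruct (Nat.eqb_spec Y Z). Qed.

Lemma sem_agree (phi : form) (r r' : valuation St) :
  (forall Y, free_in Sigma Y phi -> seteq (r Y) (r' Y)) ->
  seteq (sem r phi) (sem r' phi).
Proof.
  revert r r'; induction phi as [X|a IH|a IHa b IHb|K a IH|X a IH];
    simpl; intros r r' Hr s.
  - now apply Hr.
  - now rewrite (IH r r' Hr s).
  - now rewrite (IHa r r' (fun Y h => Hr Y (or_introl h)) s),
                (IHb r r' (fun Y h => Hr Y (or_intror h)) s).
  - split; intros Hs t Ht; apply (IH r r' Hr t); auto.
  - assert (Hupd : forall S', seteq (sem (upd r X S') a) (sem (upd r' X S') a)).
    { intro S'. apply IH. intros Y HY. apply upd_seteq; [easy|].
      intros HYX. apply Hr. auto. }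
    split; intros [S' [Hs HS']]; exists S'; split; auto;
      intros t Ht; apply (Hupd S' t); auto.
Qed.

Lemma sem_upd_comm (phi : form) (r : valuation St) Z S X T : X <> Z ->
  seteq (sem (upd (upd r Z S) X T) phi) (sem (upd (upd r X T) Z S) phi).
Proof.
  intros HXZ. apply sem_agree. intros Y _ s. now rewrite upd_comm.
Qed.

Lemma sem_nu_upd_bound (a : form) (r : valuation St) Z S :
  seteq (sem (upd r Z S) (FNu Sigma Z a)) (sem r (FNu Sigma Z a)).
Proof.
  apply sem_agree. intros Y [HZY _]. rewrite upd_neq by congruence. easy.
Qed.

Lemma sem_monotone (phi : form) b Z (r : valuation St) X Y :
  sign_ok Sigma b Z phi -> subset X Y ->
  if b then subset (sem (upd r Z X) phi) (sem (upd r Z Y) phi)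
  else subset (sem (upd r Z Y) phi) (sem (upd r Z X) phi).
Proof.
  intros Hsign HXY.
  revert b r Hsign; induction phi as [W|a IH|a IHa b' IHb|K a IH|W a IH];
    simpl; intros b r Hsign.
  - destruct (Nat.eq_dec W Z) as [->|HWZ].
    + rewrite (Hsign eq_refl), !upd_eq. exact HXY.
    + rewrite !upd_neq by exact HWZ. destruct b; intros s Hs; exact Hs.
  - specialize (IH (negb b) r Hsign).
    destruct b; simpl in IH; intros s Hn Hs; apply Hn, IH, Hs.
  - destruct Hsign as [Ha Hb].
    specialize (IHa b r Ha); specialize (IHb b r Hb).
    destruct b; intros s [Hsa Hsb]; split; auto.
  - specialize (IH b r Hsign).
    destruct b; intros s Hs t Ht; apply IH, Hs, Ht.
  - destruct (Nat.eqb_spec W Z) as [->|HWZ].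
    + destruct b; intros s Hs;
        apply sem_nu_upd_bound; apply sem_nu_upd_bound in Hs; exact Hs.
    + assert (Hbody : forall S', if b
        then subset (sem (upd (upd r Z X) W S') a) (sem (upd (upd r Z Y) W S') a)
        else subset (sem (upd (upd r Z Y) W S') a) (sem (upd (upd r Z X) W S') a)).
      { intros S'. specialize (IH b (upd r W S') Hsign).
        destruct b; intros t Ht; apply sem_upd_comm, IH, sem_upd_comm; auto. }
      destruct b; intros s [S' [Hs HS']]; exists S'; split; auto;
        intros t Ht; apply (Hbody S'), HS', Ht.
Qed.

Lemma bound_in_subst (a : form) Z Psi U :
  bound_in Sigma U a -> bound_in Sigma U (subst Sigma a Z Psi).
Proof.
  induction a as [W|a IH|a IHa b IHb|K a IH|W a IH]; simpl; try tauto.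
  destruct (Nat.eqb W Z); simpl; tauto.
Qed.

Lemma sem_subst (a : form) Z Psi (r : valuation St) :
  (forall X, bound_in Sigma X a -> free_in Sigma X Psi -> X = Z) ->
  seteq (sem r (subst Sigma a Z Psi)) (sem (upd r Z (sem r Psi)) a).
Proof.
  revert r; induction a as [W|a IH|a IHa b IHb|K a IH|W a IH];
    simpl; intros r Hcapt s.
  - unfold upd. destruct (Nat.eqb W Z); easy.
  - now rewrite (IH r Hcapt s).
  - now rewrite (IHa r (fun X h => Hcapt X (or_introl h)) s),
                (IHb r (fun X h => Hcapt X (or_intror h)) s).
  - split; intros Hs t Ht; apply (IH r Hcapt t); auto.
  - destruct (Nat.eqb_spec W Z) as [->|HWZ].
    + symmetry. apply sem_nu_upd_bound.
    + assert (HPsi : forall S', seteq (sem (upd r W S') Psi) (sem r Psi)).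
      { intros S'. apply sem_agree. intros Y HY.
        rewrite upd_neq; [easy|]. intros ->. now apply HWZ, Hcapt; [left|]. }
      assert (Hbody : forall S', seteq (sem (upd r W S') (subst Sigma a Z Psi))
                                       (sem (upd (upd r Z (sem r Psi)) W S') a)).
      { intros S' t. rewrite (IH _ (fun X h => Hcapt X (or_intror h)) t).
        transitivity (sem (upd (upd r W S') Z (sem r Psi)) a t).
        - apply sem_agree. intros Y _. apply upd_seteq; [apply HPsi|easy].
        - symmetry. now apply sem_upd_comm. }
      simpl. split; intros [S' [Hs HS']]; exists S'; split; auto;
        intros t Ht; apply (Hbody S' t); auto.
Qed.

Lemma sem_nu_unfold (a : form) Z (r : valuation St) :
  positive Sigma Z a ->
  subset (sem (upd r Z (sem r (FNu Sigma Z a))) a) (sem r (FNu Sigma Z a)).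
Proof.
  intros Hpos. apply (gfp_prefixed (fun W => sem (upd r Z W) a)).
  intros X Y HXY. exact (sem_monotone a true Z r X Y Hpos HXY).
Qed.

Lemma sem_mu_unfold (a : form) Z (r : valuation St) :
  positive Sigma Z (FNeg Sigma (subst Sigma a Z (FNeg Sigma (FVar Z)))) ->
  subset (sem (upd r Z (sem r (FMu Sigma Z a))) a) (sem r (FMu Sigma Z a)).
Proof.
  (* ⟦μZ.a⟧ = ¬ gfp g, and gfp g ⊆ g (gfp g) = ¬ ⟦a⟧(Z ↦ ⟦μZ.a⟧). *)
  intros Hpos s Hs HG.
  set (a' := FNeg Sigma (subst Sigma a Z (FNeg Sigma (FVar Z)))) in *.
  set (g := fun W => sem (upd r Z W) a').
  assert (Hmon : monotone g).
  { intros X Y HXY. exact (sem_monotone a' true Z r X Y Hpos HXY). }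
  apply (gfp_postfixed g Hmon s HG). clear Hmon.
  apply sem_subst; [intros X _ HX; symmetry; exact HX|].
  revert Hs. apply sem_agree. intros Y _.
  rewrite upd_shadow. apply upd_seteq; [|easy].
  intros t. simpl. now rewrite upd_eq.
Qed.

Lemma sem_sigma_unfold (Psi a : form) Z (r : valuation St) :
  is_sigma Sigma Psi Z a -> wf Sigma Psi ->
  subset (sem (upd r Z (sem r Psi)) a) (sem r Psi).
Proof.
  intros [-> | ->] [Hpos _].
  - now apply sem_nu_unfold.
  - now apply sem_mu_unfold.
Qed.

Lemma ext_notin_dom (D : deflist Sigma) (V : valuation St) U :
  ~ In U (dom Sigma D) -> ext V D U = V U.
Proof.
  unfold dom; revert V; induction D as [|[X Phi] D IH]; simpl; intros V HU; auto.
  rewrite IH by tauto. apply upd_neq. intros ->. auto.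
Qed.

Lemma ext_snoc (D : deflist Sigma) (V : valuation St) U Psi :
  ext V (D ++ [(U, Psi)]) = upd (ext V D) U (sem (ext V D) Psi).
Proof. revert V; induction D as [|[X Phi] D IH]; simpl; auto. Qed.

Lemma lookup_In (D : deflist Sigma) U Psi :
  lookup Sigma D U = Some Psi -> In U (dom Sigma D) /\ In Psi (map snd D).
Proof.
  unfold dom; induction D as [|[X Phi] D IH]; simpl; [discriminate|].
  destruct (Nat.eqb_spec X U) as [->|_]; intros HD.
  - injection HD as ->. auto.
  - destruct (IH HD). auto.
Qed.

Lemma ext_lookup (D : deflist Sigma) (V : valuation St) U Psi :
  NoDup (dom Sigma D) ->
  (forall i j, i <= j -> j < length D ->
     ~ free_in Sigma (nth j (dom Sigma D) 0) (nth i (map snd D) (FVar 0))) ->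
  lookup Sigma D U = Some Psi -> seteq (ext V D U) (sem (ext V D) Psi).
Proof.
  unfold dom; revert V; induction D as [|[X Phi] D IH]; simpl;
    intros V Hnodup Hacyc HD; [discriminate|].
  apply NoDup_cons_iff in Hnodup as [HX Hnodup].
  destruct (Nat.eqb_spec X U) as [->|_].
  - injection HD as <-.
    rewrite ext_notin_dom, upd_eq by exact HX.
    apply sem_agree. intros Y HY.
    assert (HYU : Y <> U).
    { intros ->. apply (Hacyc 0 0); simpl; auto; lia. }
    assert (HYD : ~ In Y (map fst D)).
    { intros HYD. apply In_nth with (d := 0) in HYD as [j [Hj HjY]].
      rewrite length_map in Hj.
      apply (Hacyc 0 (S j)); simpl; [lia | lia | now rewrite HjY]. }
    rewrite ext_notin_dom, upd_neq by assumption. easy.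
  - apply IH; auto.
    intros i j Hij Hj. apply (Hacyc (S i) (S j)); simpl; lia.
Qed.

Lemma sem_unfold_constant (D : deflist Sigma) (V : valuation St) U Psi Z a :
  is_deflist Sigma D -> lookup Sigma D U = Some Psi -> is_sigma Sigma Psi Z a ->
  subset (sem (ext V D) (subst Sigma a Z (FVar U))) (ext V D U).
Proof.
  intros [Hnodup [Hnotbound [Hacyc Hwf]]] HD Hsigma s Hs.
  destruct (lookup_In D U Psi HD) as [HUdom HPsi].
  pose proof (ext_lookup D V U Psi Hnodup Hacyc HD) as HU.
  assert (HUa : ~ bound_in Sigma U a).
  { intros Hb. apply (Hnotbound U Psi HUdom HPsi).
    destruct Hsigma as [-> | ->]; simpl; right; [exact Hb|].
    now apply bound_in_subst. }
  apply HU, (sem_sigma_unfold Psi a Z); [exact Hsigma | exact (Hwf Psi HPsi)|].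
  apply sem_subst in Hs; [|intros X HX ->; contradiction].
  revert Hs. apply sem_agree. intros Y _. apply upd_seteq; [intros t; symmetry; apply HU|easy].
Qed.

Lemma rule_inst_sound (V : valuation St) r q l :
  rule_inst Sigma St trans r q l -> is_sequent Sigma St q ->
  Forall (valid trans V) l -> valid trans V q.
Proof.
  intros Hr Hq Hl.
  destruct Hr as [S D a b S1 S2 HS1 HS2 | S D a b S1 S2 HS | S D K a S' HS'
                 | S D K a f S' Hf HS' | S D Psi Z a U S' Hsigma HS'
                 | S D U Psi Z a S' HD Hsigma HS' | S D Phi S' HSS'];
    rewrite !Forall_cons_iff in Hl; unfold valid in *; simpl in *.
  - destruct Hl as [H1 [H2 _]].
    intros s Hs. split; [apply H1, HS1 | apply H2, HS2]; exact Hs.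
  - destruct Hl as [H1 [H2 _]].
    intros s Hs [Hna Hnb].
    destruct (proj1 (HS s) Hs); [apply Hna, H1 | apply Hnb, H2]; assumption.
  - destruct Hl as [H1 _].
    intros s Hs t Ht. apply H1, HS'. eauto.
  - destruct Hl as [H1 _].
    intros s Hs Hbox. apply (Hbox (f s)); [now apply Hf|].
    apply H1, HS'. eauto.
  - destruct Hl as [H1 _].
    intros s Hs. specialize (H1 s (proj2 (HS' s) Hs)).
    rewrite ext_snoc, upd_eq in H1. exact H1.
  - destruct Hl as [H1 _], Hq as [HD' _].
    intros s Hs. apply (sem_unfold_constant D V U Psi Z a HD' HD Hsigma).
    apply H1, HS', Hs.
  - destruct Hl as [H1 _].
    intros s Hs. apply H1, HSS', Hs.
Qed.

Lemma node_at_tab_ok (T n : tab Sigma St) p :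
  tab_ok Sigma St trans T -> node_at T p = Some n -> tab_ok Sigma St trans n.
Proof.
  revert T; induction p as [|i p IH]; simpl; intros T HT Hn.
  - now injection Hn as <-.
  - destruct T as [q|q r cs]; [discriminate|].
    destruct (nth_error cs i) as [c|] eqn:Hc; [|discriminate].
    inversion_clear HT as [|? ? ? _ _ Hcs].
    apply (IH c); [|exact Hn].
    rewrite Forall_forall in Hcs. apply Hcs. eapply nth_error_In; eauto.
Qed.

End Soundness.

Theorem lemma29 (Sigma St : Type) (trans : St -> Sigma -> St -> Prop)
  (V : valuation St) (T : tab Sigma St) (p : list nat)
  (q : sequent Sigma St) (r : rule St) (cs : list (tab Sigma St)) :
  partial_tableau trans T ->
  node_at T p = Some (TNode q r cs) ->
  (forall c, In c cs -> valid trans V (root c)) ->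
  valid trans V q.
Proof.
  intros [HT _] Hn Hcs.
  pose proof (node_at_tab_ok Sigma St trans T _ p HT Hn) as Hnode.
  inversion_clear Hnode as [|? ? ? Hq Hr _].
  apply (rule_inst_sound Sigma St trans V r q (map root cs) Hr Hq).
  apply Forall_map, Forall_forall. exact Hcs.
Qed.
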